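(* Fix $t\in\{0,1\}$, a nonempty set $\mathbb{A}\subseteq\mathbb{R}$ closed under addition, and a nonempty set $\mathbb{V}\subseteq\mathbb{R}$. Let $\mathcal{B}$ be the set of weighted directed bipartite graphs $B=(V,W,F,\omega,\delta)$ with $\omega\colon F\to\mathbb{A}$, $\delta\colon W\to\mathbb{V}$, and $\mathcal{H}$ the set of AMT-type systems hypergraphs with attribute sets $(\mathbb{A},\mathbb{V})$. Define $K\colon\mathcal{B}\to\mathcal{H}$ by $K(B)=(V,E,\mu_E,\chi)$ with $E=\{\mathcal{N}(w):w\in W\}$, $\mu_E(e)=|\{w\in W:\mathcal{N}(w)=e\}|$, and $\chi_e(q)=|\{w\in W:\mathcal{N}(w)=e,\ q_w=q\}|$. Define $K_r\colon\mathcal{H}\to\mathcal{B}$ by $K_r(V,E,\mu_E,\chi)=(V,W',F',\omega',\delta')$ with $W'=\{(e,q,i): e\in E,\ \chi_e(q)>0,\ i\in\{1,\dots,\chi_e(q)\}\}$; for $w=(e,q,i)$ with $q=(\sigma,\mu,\rho,(\mu^-,\mu^+))$: $(v,w)\in F'$ iff $v\in e$ and $-1\in\sigma(v)$, with $\omega'(v,w)=\mu^-(v)$; $(w,v)\in F'$ iff $v\in e$ and $+1\in\sigma(v)$, with $\omega'(w,v)=\mu^+(v)$; and $\delta'(w)=\rho(e)$. Then: (1) $K$ is well defined, i.e. $K(B)\in\mathcal{H}$ for all $B\in\mathcal{B}$; (2) $K_r$ is well defined and $K\circ K_r$ is the identity on $\mathcal{H}$, so $K$ is surjective; (3) $K_r(K(B))$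 is type-$t$ isomorphic to $B$ for every $B\in\mathcal{B}$; (4) $K$ induces a bijection $\widetilde K$ from the type-$t$ isomorphism classes of $\mathcal{B}$ to the type-$t$ isomorphism classes of $\mathcal{H}$, with $\widetilde K([B]_t)=[K(B)]_t$ and $\widetilde K^{-1}([H]_t)=[K_r(H)]_t$.
   Context: Orientation set: $\mathcal{I}=\{\{-1\},\{+1\},\{-1,+1\}\}$. For partial functions, $\operatorname{Dom}$ denotes the domain. Admissible attribute quadruple: for a finite set $e$, an admissible attribute quadruple on $e$ (w.r.t. $\mathbb{A},\mathbb{V}$) is $q=(\sigma,\mu,\rho,(\mu^-,\mu^+))$ with $\sigma\colon e\to\mathcal{I}$, $\mu\colon e\to\mathbb{A}$, $\rho\colon\{e\}\to\mathbb{V}$ (a label $\rho(e)$ of $e$ itself), and partial functions $\mu^-,\mu^+\colon e\rightharpoonup\mathbb{A}$ with $\operatorname{Dom}(\mu^-)=\{v\in e:-1\in\sigma(v)\}$, $\operatorname{Dom}(\mu^+)=\{v\in e:+1\in\sigma(v)\}$, and for $v\in e$: $\mu^-(v)=\mu(v)$ if $\sigma(v)=\{-1\}$; $\mu^+(v)=\mu(v)$ if $\sigma(v)=\{+1\}$; $\mu^-(v)+\mu^+(v)=\mu(v)$ if $\sigma(v)=\{-1,+1\}$. AMT-type systems hypergraph with attribute sets $(\mathbb{A},\mathbb{V})$: a tuple $H=(V,E,\mu_E,\chi)$ where $V$ is a finite set of labelled vertices, $E\subseteq\mathcal{P}(V)$ (the empty hyperedge allowed), $\mu_E\colon E\to\mathbb{N}_+$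 (hyperedge multiplicities), and for each $e\in E$, $\chi_e$ is a function from the admissible attribute quadruples on $e$ to $\mathbb{N}$ with $\sum_q\chi_e(q)=\mu_E(e)$. (In the paper this is a systems hypergraph whose distribution hierarchy consists of the orientation function $\widehat\sigma$, multiset function $\widehat\mu$, hyperedge-label function $\widehat\rho$ (rank 0) and negative/positive-oriented multiset function $\widehat\mu^{-/+}$ (rank 1, depending on $\widehat\sigma,\widehat\mu$); these are the marginals of the association function $\chi$, e.g. $\widehat\sigma_e(\sigma)=\sum_{q\text{ with first component }\sigma}\chi_e(q)$, so they are determined by the data above.) Isomorphisms of systems hypergraphs (same $\mathbb{A},\mathbb{V}$): a type-0 isomorphism $H\to H'$ is a bijection $\phi\colon V\to V'$ with $e\in E\iff\phi(e)\in E'$, $\mu'_{E'}(\phi(e))=\mu_E(e)$, and $\chi'_{\phi(e)}(\phi_*q)=\chi_e(q)$ for all $e,q$, where $\phi_*(\sigma,\mu,\rho,(\mu^-,\mu^+))=(\sigma\circ\phi^{-1},\mu\circ\phi^{-1},\rho',(\mu^-\circ\phi^{-1},\mu^+\circ\phi^{-1}))$ with $\rho'(\phi(e))=\rho(e)$; a type-1 isomorphism additionally preserves vertex labels, i.e. $V=V'$ and $\phi$ is the identity (so type-1 classes are singletons). Weighted directed bipartite graph: $B=(V,W,F,\omega,\delta)$ with $V$ (first part, labelled vertices) and $W$ (second part) finite disjoint sets, $F\subseteq(V\times W)\sqcup(W\times V)$, $\omega\colon F\to\mathbb{A}$, $\delta\colon W\to\mathbb{V}$. For $w\in W$: $\mathcal{N}_{\mathrm{in}}(w)=\{v:(v,w)\in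 F\}$, $\mathcal{N}_{\mathrm{out}}(w)=\{v:(w,v)\in F\}$, $\mathcal{N}(w)=\mathcal{N}_{\mathrm{in}}(w)\cup\mathcal{N}_{\mathrm{out}}(w)$. The induced quadruple $q_w=(\sigma_w,\mu_w,\rho_w,(\mu^-_w,\mu^+_w))$ on $\mathcal{N}(w)$: $\sigma_w(v)=\{-1\}$ if $v\in\mathcal{N}_{\mathrm{in}}(w)\setminus\mathcal{N}_{\mathrm{out}}(w)$, $\{+1\}$ if $v\in\mathcal{N}_{\mathrm{out}}(w)\setminus\mathcal{N}_{\mathrm{in}}(w)$, $\{-1,+1\}$ if in both; $\mu_w(v)$ is the sum of $\omega$ over the arcs between $v$ and $w$; $\rho_w(\mathcal{N}(w))=\delta(w)$; $\operatorname{Dom}(\mu^-_w)=\mathcal{N}_{\mathrm{in}}(w)$, $\mu^-_w(v)=\omega(v,w)$; $\operatorname{Dom}(\mu^+_w)=\mathcal{N}_{\mathrm{out}}(w)$, $\mu^+_w(v)=\omega(w,v)$. Isomorphisms of weighted directed bipartite graphs (same $\mathbb{A},\mathbb{V}$): a type-0 isomorphism $B\to B'$ is a bijection $V\cup W\to V'\cup W'$ mapping $V$ onto $V'$ and $W$ onto $W'$, preserving arcs in both directions, arc weights and $\delta$; a type-1 isomorphism additionally preserves first-part labels, i.e. $V=V'$ and it is the identity on $V$. *)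

From mathcomp Require Import all_boot all_algebra.
From mathcomp Require Import finmap.
From mathcomp Require Import Rstruct.
From Stdlib Require Import Rdefinitions.

Set Implicit Arguments.
Unset Strict Implicit.
Unset Printing Implicit Defensive.

Local Open Scope fset_scope.
Local Open Scope fmap_scope.

Section Defs.
(* L : universe of vertex labels (the vertices of V are labelled elements). *)
Variable L : choiceType.

Definition m1 : int := Negz 0. (* = -1 *)
Definition p1 : int := Posz 1.

Definition orientSet : seq {fset int} :=
  [:: [fset m1]; [fset p1]; [fset m1; p1]].

(* Attribute quadruple q = (sigma, mu, rho, (mu^-, mu^+)) on a finite set e:
   sigma, mu, mu^-, mu^+ are finite maps keyed by vertices (their domains
   are constrained by admissibility), rho is the label rho(e). *)
Definition quad : Type :=
  ({fmap L -> {fset int}} * {fmap L -> R} * R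
   * ({fmap L -> R} * {fmap L -> R}))%type.

Definition q_sigma (q : quad) := q.1.1.1.
Definition q_mu    (q : quad) := q.1.1.2.
Definition q_rho   (q : quad) := q.1.2.
Definition q_mum   (q : quad) := q.2.1.
Definition q_mup   (q : quad) := q.2.2.

Definition sig_at (q : quad) (v : L) : {fset int} := odflt fset0 (q_sigma q).[? v].

Definition admissible (AA VV : R -> Prop) (e : {fset L}) (q : quad) : Prop :=
  domf (q_sigma q) = e /\
  domf (q_mu q) = e /\
  VV (q_rho q) /\
  domf (q_mum q) = [fset v in e | m1 \in sig_at q v] /\
  domf (q_mup q) = [fset v in e | p1 \in sig_at q v] /\
  (forall v, v \in e ->
     sig_at q v \in orientSet /\
     (forall a, (q_mu q).[? v] = Some a -> AA a) /\
     (forall a, (q_mum q).[? v] = Some a -> AA a) /\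
     (forall a, (q_mup q).[? v] = Some a -> AA a) /\
     (sig_at q v = [fset m1] -> (q_mum q).[? v] = (q_mu q).[? v]) /\
     (sig_at q v = [fset p1] -> (q_mup q).[? v] = (q_mu q).[? v]) /\
     (sig_at q v = [fset m1; p1] ->
        exists a b c, (q_mum q).[? v] = Some a /\ (q_mup q).[? v] = Some b /\
                      (q_mu q).[? v] = Some c /\ Rplus a b = c)).

(* Systems hypergraphs (H = (V, E, mu_E, chi)).
   mu_E is extended by 0 outside E, chi_e is a finitely supported function
   on quadruples (extended by 0 outside the admissible quadruples on e),
   and chi_e is the zero function for e not in E. *)
Record hgraph := HGraph {
  hV : {fset L};
  hE : {fset {fset L}};
  hmu : {fset L} -> nat;
  hchi : {fset L} -> {fsfun quad -> nat with 0%N}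
}.

Definition inH (AA VV : R -> Prop) (H : hgraph) : Prop :=
  [/\ forall e, e \in hE H -> e `<=` hV H,
      forall e, (e \in hE H) = (0 < hmu H e)%N,
      forall e, e \notin hE H -> hchi H e = [fsfun],
      forall e q, (0 < hchi H e q)%N -> e \in hE H /\ admissible AA VV e q &
      forall e, e \in hE H -> (\sum_(q <- finsupp (hchi H e)) hchi H e q)%N = hmu H e].

(* The second part W is a finite type (hence disjoint from V).
   bin v w = Some a  iff  (v,w) in F with omega(v,w) = a;
   bout w v = Some a iff  (w,v) in F with omega(w,v) = a. *)
Record bigraph := BiGraph {
  bV : {fset L};
  bW : finType;
  bin : L -> bW -> option R;
  bout : bW -> L -> option R;
  bdelta : bW -> R
}.
Arguments bin : clear implicits.
Arguments bout : clear implicits.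
Arguments bdelta : clear implicits.

Definition inB (AA VV : R -> Prop) (B : bigraph) : Prop :=
  [/\ forall v w a, bin B v w = Some a -> v \in bV B /\ AA a,
      forall w v a, bout B w v = Some a -> v \in bV B /\ AA a &
      forall w, VV (bdelta B w)].

Definition N_in (B : bigraph) (w : bW B) : {fset L} :=
  [fset v in bV B | bin B v w != None].
Definition N_out (B : bigraph) (w : bW B) : {fset L} :=
  [fset v in bV B | bout B w v != None].
Definition N (B : bigraph) (w : bW B) : {fset L} := N_in w `|` N_out w.

Definition wt (o : option R) : R := match o with Some a => a | None => R0 end.

Definition qw (B : bigraph) (w : bW B) : quad :=
  ( [fmap v : N w =>
       if (val v \in N_in w) && (val v \notin N_out w) then [fset m1]
       else if (val v \in N_out w) && (val v \notin N_in w) then [fset p1]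
       else [fset m1; p1]],
    [fmap v : N w => Rplus (wt (bin B (val v) w)) (wt (bout B w (val v)))],
    bdelta B w,
    ( [fmap v : N_in w => wt (bin B (val v) w)],
      [fmap v : N_out w => wt (bout B w (val v))] ) ).

Definition K (B : bigraph) : hgraph :=
  HGraph (bV B)
    [fset N w | w : bW B]
    (fun e => #|[pred w : bW B | N w == e]|)
    (fun e => [fsfun q in [fset qw w | w : bW B] =>
                 #|[pred w : bW B | (N w == e) && (qw w == q)]| | 0%N]).

Definition Wlist (H : hgraph) : seq ({fset L} * quad * nat) :=
  flatten [seq flatten [seq [seq (e, q, i) | i <- iota 1 (hchi H e q)]
                        | q <- enum_fset (finsupp (hchi H e))]
          | e <- enum_fset (hE H)].

Definition Kr (H : hgraph) : bigraph :=
  @BiGraph (hV H) (seq_sub (Wlist H))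
    (fun v w => let: (e, q, i) := ssval w in
                if (v \in e) && (m1 \in sig_at q v) then (q_mum q).[? v] else None)
    (fun w v => let: (e, q, i) := ssval w in
                if (v \in e) && (p1 \in sig_at q v) then (q_mup q).[? v] else None)
    (fun w => let: (e, q, i) := ssval w in q_rho q).

(* Isomorphisms.  A bijection V -> V' is a function f : L -> L injective on V
   with f @` V = V'.  Type 1 additionally requires f to be the identity on V. *)
Definition isoB (t : nat) (B B' : bigraph) : Prop :=
  exists (f : L -> L) (g : bW B -> bW B'),
    {in bV B &, injective f} /\ f @` bV B = bV B' /\ bijective g /\
    (forall v w, v \in bV B -> bin B' (f v) (g w) = bin B v w) /\
    (forall w v, v \in bV B -> bout B' (g w) (f v) = bout B w v) /\
    (forall w, bdelta B' (g w) = bdelta B w) /\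
    (t = 1%N -> {in bV B, forall v, f v = v}).

(* push-forward of a finite map along f (relabelling of the keys) *)
Definition pushf (T : Type) (f : L -> L) (m : {fmap L -> T}) : {fmap L -> T} :=
  foldr (fun k acc => match m.[? k] with Some x => acc.[f k <- x] | None => acc end)
        [fmap] (enum_fset (domf m)).

Definition pushq (f : L -> L) (q : quad) : quad :=
  (pushf f (q_sigma q), pushf f (q_mu q), q_rho q,
   (pushf f (q_mum q), pushf f (q_mup q))).

Definition isoH (AA VV : R -> Prop) (t : nat) (H H' : hgraph) : Prop :=
  exists f : L -> L,
    {in hV H &, injective f} /\ f @` hV H = hV H' /\
    (forall e, e `<=` hV H -> (e \in hE H) = (f @` e \in hE H')) /\
    (forall e, e \in hE H -> hmu H' (f @` e) = hmu H e) /\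
    (forall e q, e \in hE H -> admissible AA VV e q ->
       hchi H' (f @` e) (pushq f q) = hchi H e q) /\
    (t = 1%N -> {in hV H, forall v, f v = v}).

Definition clsB (AA VV : R -> Prop) (t : nat) (B : bigraph) : bigraph -> Prop :=
  fun B' => inB AA VV B' /\ isoB t B B'.
Definition clsH (AA VV : R -> Prop) (t : nat) (H : hgraph) : hgraph -> Prop :=
  fun H' => inH AA VV H' /\ isoH AA VV t H H'.

End Defs.

(* K keeps, of every second-part vertex w, only its neighbourhood N(w) and its
   induced quadruple q_w, counted with multiplicity; K_r rebuilds chi_e(q)
   vertices (e, q, i) from each pair (e, q).  Admissibility of q is exactly what
   makes the arcs of (e, q, i) induce N = e and q_w = q, so K (K_r H) = H.
   Conversely, numbering the vertices of B that share the same pair (N(w), q_w)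
   gives a bijection from W onto the second part of K_r (K B) that fixes V.
   A relabelling f of V acts on quadruples by push-forward and commutes with
   both K and K_r, so both maps preserve type-t isomorphism and they induce
   mutually inverse maps on isomorphism classes. *)

From Pilot Require Import Defs.
From mathcomp Require Import all_boot all_algebra.
From mathcomp Require Import finmap.
From mathcomp Require Import Rstruct.
From Stdlib Require Import Rdefinitions.
From Stdlib Require RIneq Raxioms.
From Stdlib Require Import FunctionalExtensionality PropExtensionality.

Set Implicit Arguments.
Unset Strict Implicit.
Unset Printing Implicit Defensive.
Local Open Scope fset_scope.
Local Open Scope fmap_scope.

(* Unqualified [N] would be the binary naturals. *)
Local Notation N := Defs.N.

(** * Images and push-forwards along maps injective on a domain *)

Lemma in_fset_sep (K : choiceType) (A : {fset K}) (P : pred K) k :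
  (k \in [fset x in A | P x]) = (k \in A) && P k.
Proof. by rewrite !inE. Qed.

Section ImfsetIn.
Variables (T U : choiceType) (f : T -> U) (D : {fset T}).

Lemma eq_imfset_mem (A : {fset T}) (A' : {fset U}) :
  A `<=` D -> A' `<=` f @` D -> {in D, forall v, (f v \in A') = (v \in A)} ->
  A' = f @` A.
Proof.
move=> /fsubsetP AD /fsubsetP A'D memA.
apply/fsetP => y; apply/idP/imfsetP => [yA'|[v /= vA ->]]; last by rewrite memA ?AD.
have /imfsetP [v /= vD yE] := A'D _ yA'.
by exists v => //; rewrite -memA // -yE.
Qed.

Hypothesis f_inj : {in D &, injective f}.

Lemma mem_imfset_in (A : {fset T}) v :
  A `<=` D -> v \in D -> (f v \in f @` A) = (v \in A).
Proof.
move=> /fsubsetP AD vD; apply/imfsetP/idP => [[u /= uA fvu]|vA]; last by exists v.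
by rewrite (f_inj vD (AD _ uA) fvu).
Qed.

Lemma imfset_inj_in (A A' : {fset T}) :
  A `<=` D -> A' `<=` D -> f @` A = f @` A' -> A = A'.
Proof.
move=> AD A'D fAA'; apply/fsetP => v; have [vD|vD] := boolP (v \in D).
  by rewrite -(mem_imfset_in AD vD) fAA' mem_imfset_in.
by rewrite (contraNF (fsubsetP AD v)) ?(contraNF (fsubsetP A'D v)).
Qed.

End ImfsetIn.

Section Pushforward.
Variables (L : choiceType) (T : Type).
Implicit Types (f : L -> L) (m : {fmap L -> T}) (D : {fset L}).

Lemma fnd_pushf f m y :
  (pushf f m).[? y] =
  if [seq k <- enum_fset (domf m) | f k == y] is k :: _ then m.[? k] else None.
Proof.
rewrite /pushf; have : {subset enum_fset (domf m) <= domf m} by [].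
elim: (enum_fset _) => [|k s IH] sub /=; first by rewrite fnd_fmap0.
have km : k \in domf m by apply: sub; rewrite mem_head.
rewrite (in_fnd km) fnd_set; have [//|_] := eqVneq y (f k); first by rewrite in_fnd.
rewrite IH // => k' k's.
by apply: sub; rewrite in_cons k's orbT.
Qed.

Lemma fnd_pushf_in f m D k : domf m `<=` D -> {in D &, injective f} -> k \in D ->
  (pushf f m).[? f k] = m.[? k].
Proof.
move=> /fsubsetP mD f_inj kD; rewrite fnd_pushf.
case E: [seq _ <- _ | _] => [|k' s].
  apply/esym/not_fnd/negP => km.
  have : k \in [seq k' <- enum_fset (domf m) | f k' == f k] by rewrite mem_filter eqxx.
  by rewrite E.
have : k' \in [seq k' <- enum_fset (domf m) | f k' == f k] by rewrite E mem_head.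
rewrite mem_filter => /andP [/eqP fk'k k'm].
by rewrite (f_inj _ _ (mD _ k'm) kD fk'k).
Qed.

Lemma fnd_pushf_notin f m D y : domf m `<=` D -> y \notin f @` D ->
  (pushf f m).[? y] = None.
Proof.
move=> /fsubsetP mD yD; rewrite fnd_pushf.
case E: [seq _ <- _ | _] => [|k s] //.
have : k \in [seq k <- enum_fset (domf m) | f k == y] by rewrite E mem_head.
rewrite mem_filter => /andP [/eqP fky km].
by move: yD; rewrite -fky in_imfset ?mD.
Qed.

Lemma domf_pushf f m : {in domf m &, injective f} -> domf (pushf f m) = f @` domf m.
Proof.
move=> f_inj; apply: (eq_imfset_mem (D := domf m)) => // [|v vm].
  apply/fsubsetP => y; rewrite -fndSome.
  by case: (boolP (y \in _)) => // yD; rewrite (fnd_pushf_notin (fsubset_refl _) yD).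
by rewrite -!fndSome (fnd_pushf_in (fsubset_refl _) f_inj vm).
Qed.

Lemma pushf_eq f m m' D : domf m `<=` D -> {in D &, injective f} ->
  domf m' `<=` f @` D -> {in D, forall v, m'.[? f v] = m.[? v]} -> m' = pushf f m.
Proof.
move=> mD f_inj m'D fm'; apply/fmapP => y.
have [/imfsetP [v /= vD ->]|yD] := boolP (y \in f @` D).
  by rewrite fm' // (fnd_pushf_in mD f_inj vD).
by rewrite (fnd_pushf_notin mD yD) not_fnd //; apply: contra yD; apply: (fsubsetP m'D).
Qed.

Lemma pushf_id m : pushf id m = m.
Proof. by apply/esym/(pushf_eq (D := domf m)); rewrite ?imfset_id. Qed.

Lemma pushf_comp f f' m D : domf m `<=` D -> {in D &, injective f} ->
  {in f @` D &, injective f'} -> pushf f' (pushf f m) = pushf (f' \o f) m.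
Proof.
move=> mD f_inj f'_inj.
have fD : domf (pushf f m) `<=` f @` D.
  rewrite domf_pushf; first exact/subset_imfset/fsubsetP.
  exact: (sub_in2 (fsubsetP mD)).
have ff'_inj : {in D &, injective (f' \o f)}.
  by move=> a b aD bD /f'_inj fab; apply: f_inj; rewrite // fab ?in_imfset.
apply: (pushf_eq (D := D)) => // [|v vD].
  rewrite domf_pushf; last exact: (sub_in2 (fsubsetP fD)).
  by rewrite [X in _ `<=` X]imfset_comp; apply/subset_imfset/fsubsetP.
by rewrite /= (fnd_pushf_in fD f'_inj) ?in_imfset // (fnd_pushf_in mD f_inj vD).
Qed.

Lemma pushf_inj f m m' D : domf m `<=` D -> domf m' `<=` D -> {in D &, injective f} ->
  pushf f m = pushf f m' -> m = m'.
Proof.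
move=> mD m'D f_inj fmm'; apply/fmapP => k; have [kD|kD] := boolP (k \in D).
  by rewrite -(fnd_pushf_in mD f_inj kD) fmm' (fnd_pushf_in m'D f_inj kD).
by rewrite !not_fnd //; apply: contra kD; apply: fsubsetP.
Qed.

End Pushforward.

(** * Attribute quadruples *)

Lemma quadP (L : choiceType) (q q' : quad L) :
  q_sigma q = q_sigma q' -> q_mu q = q_mu q' -> q_rho q = q_rho q' ->
  q_mum q = q_mum q' -> q_mup q = q_mup q' -> q = q'.
Proof.
case: q => [[[? ?] ?] [? ?]]; case: q' => [[[? ?] ?] [? ?]].
by rewrite /q_sigma /q_mu /q_rho /q_mum /q_mup /= => -> -> -> -> ->.
Qed.

Section Quadruples.
Variable L : choiceType.
Implicit Types (q : quad L) (e D : {fset L}) (f : L -> L).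

Definition quad_on q D :=
  [/\ domf (q_sigma q) `<=` D, domf (q_mu q) `<=` D, domf (q_mum q) `<=` D
    & domf (q_mup q) `<=` D].

Lemma quad_onS q D D' : D `<=` D' -> quad_on q D -> quad_on q D'.
Proof. by move=> DD' [? ? ? ?]; split; apply: fsubset_trans DD'. Qed.

Lemma pushq_id q : pushq id q = q.
Proof. by case: q => [[[? ?] ?] [? ?]]; rewrite /pushq !pushf_id. Qed.

Lemma pushq_comp f f' q D : quad_on q D -> {in D &, injective f} ->
  {in f @` D &, injective f'} -> pushq f' (pushq f q) = pushq (f' \o f) q.
Proof. by case=> ? ? ? ? f_inj f'_inj; rewrite /pushq /= !(pushf_comp _ f_inj f'_inj). Qed.

Lemma pushq_inj f q q' D : quad_on q D -> quad_on q' D -> {in D &, injective f} ->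
  pushq f q = pushq f q' -> q = q'.
Proof.
move=> [sD muD mD pD] [sD' muD' mD' pD'] f_inj fqq'; apply: quadP.
- exact: (pushf_inj sD sD' f_inj (congr1 (@q_sigma _) fqq')).
- exact: (pushf_inj muD muD' f_inj (congr1 (@q_mu _) fqq')).
- exact: (congr1 (@q_rho _) fqq').
- exact: (pushf_inj mD mD' f_inj (congr1 (@q_mum _) fqq')).
- exact: (pushf_inj pD pD' f_inj (congr1 (@q_mup _) fqq')).
Qed.

Lemma sig_at_pushq f q D v : quad_on q D -> {in D &, injective f} -> v \in D ->
  sig_at (pushq f q) (f v) = sig_at q v.
Proof. by case=> sD _ _ _ f_inj vD; rewrite /sig_at /= (fnd_pushf_in sD f_inj vD). Qed.

Lemma sig_at_fnd q v : v \in domf (q_sigma q) -> (q_sigma q).[? v] = Some (sig_at q v).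
Proof. by rewrite /sig_at; case: fndP. Qed.

End Quadruples.

Lemma orientSetP (s : {fset int}) : s \in orientSet ->
  [\/ s = [fset m1], s = [fset p1] | s = [fset m1; p1]].
Proof. by rewrite !inE => /or3P [] /eqP; [constructor 1 | constructor 2 | constructor 3]. Qed.

Lemma orient_eq (s s' : {fset int}) : s \in orientSet -> s' \in orientSet ->
  (m1 \in s) = (m1 \in s') -> (p1 \in s) = (p1 \in s') -> s = s'.
Proof. by do 2![case/orientSetP=> ->]; rewrite !inE. Qed.

(* [admissible AA VV e q] unfolds to its domain and label conditions followed by
   [{in e, forall v, admissible_at AA q v}]. *)
Definition admissible_at (L : choiceType) (AA : R -> Prop) (q : quad L) (v : L) : Prop :=
  sig_at q v \in orientSet /\
  (forall a, (q_mu q).[? v] = Some a -> AA a) /\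
  (forall a, (q_mum q).[? v] = Some a -> AA a) /\
  (forall a, (q_mup q).[? v] = Some a -> AA a) /\
  (sig_at q v = [fset m1] -> (q_mum q).[? v] = (q_mu q).[? v]) /\
  (sig_at q v = [fset p1] -> (q_mup q).[? v] = (q_mu q).[? v]) /\
  (sig_at q v = [fset m1; p1] ->
     exists a b c, (q_mum q).[? v] = Some a /\ (q_mup q).[? v] = Some b /\
                   (q_mu q).[? v] = Some c /\ Rplus a b = c).

Section Admissible.
Variables (L : choiceType) (AA VV : R -> Prop) (e : {fset L}) (q : quad L).
Hypothesis q_adm : admissible AA VV e q.

Lemma admissible_quad_on : quad_on q e.
Proof.
have [ds [dmu [_ [dm [dp _]]]]] := q_adm.
by split; rewrite ?ds ?dmu ?dm ?dp // fset_sub.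
Qed.

Lemma admissible_fnd_mum v :
  (if (v \in e) && (m1 \in sig_at q v) then (q_mum q).[? v] else None) = (q_mum q).[? v].
Proof.
have [_ [_ [_ [dm _]]]] := q_adm.
case: ifP => // vNm; have vNm' : v \notin domf (q_mum q) by rewrite dm !inE vNm.
by rewrite (not_fnd vNm').
Qed.

Lemma admissible_fnd_mup v :
  (if (v \in e) && (p1 \in sig_at q v) then (q_mup q).[? v] else None) = (q_mup q).[? v].
Proof.
have [_ [_ [_ [_ [dp _]]]]] := q_adm.
case: ifP => // vNp; have vNp' : v \notin domf (q_mup q) by rewrite dp !inE vNp.
by rewrite (not_fnd vNp').
Qed.

Lemma admissible_mum_Some v a : (q_mum q).[? v] = Some a -> v \in e /\ AA a.
Proof.
have [_ [_ [_ [dm [_ Hv]]]]] := q_adm; case: fndP => // vm ma.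
move: (vm); rewrite dm in_fset_sep => /andP [ve _]; split => //.
by have [_ [_ [Am _]]] := Hv v ve; apply: Am; rewrite (in_fnd vm).
Qed.

Lemma admissible_mup_Some v a : (q_mup q).[? v] = Some a -> v \in e /\ AA a.
Proof.
have [_ [_ [_ [_ [dp Hv]]]]] := q_adm; case: fndP => // vp pa.
move: (vp); rewrite dp in_fset_sep => /andP [ve _]; split => //.
by have [_ [_ [_ [Ap _]]]] := Hv v ve; apply: Ap; rewrite (in_fnd vp).
Qed.

Lemma admissible_domfU : domf (q_mum q) `|` domf (q_mup q) = e.
Proof.
have [_ [_ [_ [dm [dp Hv]]]]] := q_adm; rewrite dm dp.
apply/fsetP => v; rewrite !inE; case: (boolP (v \in e)) => //= ve.
by case/orientSetP: (Hv v ve).1 => ->; rewrite !inE.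
Qed.

Lemma admissible_fnd_mu v : v \in e ->
  (q_mu q).[? v] = Some (Rplus (wt (q_mum q).[? v]) (wt (q_mup q).[? v])).
Proof.
have [_ [_ [_ [dm [dp Hv]]]]] := q_adm; move=> ve.
have [sv [_ [_ [_ [Em [Ep Emp]]]]]] := Hv v ve.
case/orientSetP: sv => sE.
- have vm : v \in domf (q_mum q) by rewrite dm !inE ve sE !inE.
  have vNp : v \notin domf (q_mup q) by rewrite dp !inE ve sE !inE.
  by rewrite -Em // (not_fnd vNp) (in_fnd vm) /= RIneq.Rplus_0_r.
- have vNm : v \notin domf (q_mum q) by rewrite dm !inE ve sE !inE.
  have vp : v \in domf (q_mup q) by rewrite dp !inE ve sE !inE.
  by rewrite -Ep // (not_fnd vNm) (in_fnd vp) /= Raxioms.Rplus_0_l.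
- by have [a [b [c [-> [-> [-> <-]]]]]] := Emp sE.
Qed.

End Admissible.

Lemma admissible_pushq (L : choiceType) AA VV (f : L -> L) (e : {fset L}) q :
  {in e &, injective f} -> admissible AA VV e q ->
  admissible AA VV (f @` e) (pushq f q).
Proof.
move=> f_inj q_adm; have [sE muE mE pE] := admissible_quad_on q_adm.
have [ds [dmu [rho [dm [dp Hv]]]]] := q_adm.
have sig_f v : v \in e -> sig_at (pushq f q) (f v) = sig_at q v.
  exact: sig_at_pushq (admissible_quad_on q_adm) f_inj.
have dom_f (i : int) : [fset y in f @` e | i \in sig_at (pushq f q) y] =
    f @` [fset v in e | i \in sig_at q v].
  apply: (eq_imfset_mem (D := e)); [exact: fset_sub | exact: fset_sub |].
  by move=> v ve; rewrite !in_fset_sep (mem_imfset_in f_inj (fsubset_refl _) ve) sig_f.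
split; first by rewrite domf_pushf -?ds //; exact: (sub_in2 (fsubsetP sE)).
split; first by rewrite domf_pushf -?dmu //; exact: (sub_in2 (fsubsetP muE)).
split; first exact: rho.
split; first by rewrite dom_f -dm domf_pushf //; exact: (sub_in2 (fsubsetP mE)).
split; first by rewrite dom_f -dp domf_pushf //; exact: (sub_in2 (fsubsetP pE)).
move=> _ /imfsetP [v /= ve ->].
rewrite sig_f // /= !(fnd_pushf_in _ f_inj ve) //; exact: Hv.
Qed.

(** * The map K *)

Section Neighbourhoods.
Variables (L : choiceType) (B : bigraph L).
Implicit Types (w : bW B) (v : L).

Lemma N_in_sub w : N_in w `<=` bV B. Proof. exact: fset_sub. Qed.
Lemma N_out_sub w : N_out w `<=` bV B. Proof. exact: fset_sub. Qed.
Lemma N_sub w : N w `<=` bV B. Proof. by rewrite fsubUset N_in_sub N_out_sub. Qed.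

Lemma qw_on w : quad_on (qw w) (bV B).
Proof. by split; [exact: N_sub | exact: N_sub | exact: N_in_sub | exact: N_out_sub]. Qed.

Lemma mem_N w v : (v \in N w) = (v \in N_in w) || (v \in N_out w).
Proof. exact: in_fsetU. Qed.

Lemma sig_at_qw_m1 w v : (m1 \in sig_at (qw w) v) = (v \in N_in w).
Proof.
rewrite /sig_at; case: fndP => [vN|vN]; last first.
  by apply/esym/negbTE; apply: contra vN => vi; rewrite mem_N vi.
by rewrite ffunE /=; move: vN; rewrite mem_N; do 2!case: (_ \in _); rewrite !inE.
Qed.

Lemma sig_at_qw_p1 w v : (p1 \in sig_at (qw w) v) = (v \in N_out w).
Proof.
rewrite /sig_at; case: fndP => [vN|vN]; last first.
  by apply/esym/negbTE; apply: contra vN => vo; rewrite mem_N vo orbT.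
by rewrite ffunE /=; move: vN; rewrite mem_N; do 2!case: (_ \in _); rewrite !inE.
Qed.

Lemma sig_at_qw_orient w v : v \in N w -> sig_at (qw w) v \in orientSet.
Proof.
rewrite /sig_at; case: fndP => // vN _; rewrite ffunE /=.
by case: ifP => _; [|case: ifP => _]; rewrite !inE eqxx ?orbT.
Qed.

Lemma fnd_qw_sigma w v :
  (q_sigma (qw w)).[? v] = if v \in N w then Some (sig_at (qw w) v) else None.
Proof. by rewrite /sig_at; case: fndP. Qed.

Lemma fnd_qw_mu w v : (q_mu (qw w)).[? v] =
  if v \in N w then Some (Rplus (wt (bin v w)) (wt (bout w v))) else None.
Proof. by case: fndP => vN; rewrite ?ffunE. Qed.

Lemma fnd_qw_mum w v : (q_mum (qw w)).[? v] = if v \in bV B then bin v w else None.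
Proof.
case: fndP => [vi|]; first by rewrite ffunE /=; move: vi; rewrite !inE => /andP [->]; case: bin.
by rewrite !inE negb_and negbK; case: (v \in bV B) => //= /eqP.
Qed.

Lemma fnd_qw_mup w v : (q_mup (qw w)).[? v] = if v \in bV B then bout w v else None.
Proof.
case: fndP => [vo|]; first by rewrite ffunE /=; move: vo; rewrite !inE => /andP [->]; case: bout.
by rewrite !inE negb_and negbK; case: (v \in bV B) => //= /eqP.
Qed.

Lemma qw_admissible_at AA VV w v :
  (forall a b, AA a -> AA b -> AA (Rplus a b)) -> inB AA VV B -> v \in N w ->
  admissible_at AA (qw w) v.
Proof.
move=> AAD [B_in B_out _] vN; have vV := fsubsetP (N_sub w) v vN.
have sv := sig_at_qw_orient vN; have := sig_at_qw_m1 w v; have := sig_at_qw_p1 w v.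
rewrite /admissible_at fnd_qw_mu fnd_qw_mum fnd_qw_mup vN vV; move: vN; rewrite mem_N !inE vV /=.
case Ei: (bin v w) => [a|]; case Eo: (bout w v) => [b|] //= _ sp sm.
- have Aa := (B_in _ _ _ Ei).2; have Ab := (B_out _ _ _ Eo).2.
  have -> : sig_at (qw w) v = [fset m1; p1].
    by apply: orient_eq; rewrite ?sm ?sp // !inE ?eqxx ?orbT.
  split; first by rewrite eqxx !orbT.
  split; first by move=> c [<-]; exact: AAD.
  split; first by move=> c [<-].
  split; first by move=> c [<-].
  split; first by move/fsetP/(_ p1); rewrite !inE.
  split; first by move/fsetP/(_ m1); rewrite !inE.
  by exists a, b, (Rplus a b).
- have Aa := (B_in _ _ _ Ei).2; rewrite RIneq.Rplus_0_r.
  have -> : sig_at (qw w) v = [fset m1] by apply: orient_eq; rewrite ?sm ?sp // !inE ?eqxx.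
  split; first by rewrite eqxx.
  split; first by move=> c [<-].
  split; first by move=> c [<-].
  split; first by [].
  split; first by [].
  split; first by move/fsetP/(_ m1); rewrite !inE.
  by move/fsetP/(_ p1); rewrite !inE.
- have Ab := (B_out _ _ _ Eo).2; rewrite Raxioms.Rplus_0_l.
  have -> : sig_at (qw w) v = [fset p1] by apply: orient_eq; rewrite ?sm ?sp // !inE ?eqxx ?orbT.
  split; first by rewrite eqxx orbT.
  split; first by move=> c [<-].
  split; first by [].
  split; first by move=> c [<-].
  split; first by move/fsetP/(_ p1); rewrite !inE.
  split; first by [].
  by move/fsetP/(_ m1); rewrite !inE.
Qed.

Lemma qw_admissible AA VV w :
  (forall a b, AA a -> AA b -> AA (Rplus a b)) -> inB AA VV B ->
  admissible AA VV (N w) (qw w).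
Proof.
move=> AAD B_in; split; first by [].
split; first by [].
split; first by have [_ _ B_delta] := B_in; apply: B_delta.
split.
  change (N_in w = [fset v in N w | m1 \in sig_at (qw w) v]).
  by apply/fsetP => v; rewrite in_fset_sep sig_at_qw_m1 mem_N andb_idl // => ->.
split.
  change (N_out w = [fset v in N w | p1 \in sig_at (qw w) v]).
  by apply/fsetP => v; rewrite in_fset_sep sig_at_qw_p1 mem_N andb_idl // => ->; rewrite orbT.
by move=> v; exact: (qw_admissible_at AAD B_in).
Qed.

Lemma N_qw_of_arcs AA VV w e q : admissible AA VV e q -> e `<=` bV B ->
  (forall v, bin v w = (q_mum q).[? v]) -> (forall v, bout w v = (q_mup q).[? v]) ->
  bdelta w = q_rho q -> N w = e /\ qw w = q.
Proof.
move=> q_adm eV arc_in arc_out arc_delta.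
have [sE muE mE pE] := admissible_quad_on q_adm.
have [ds [dmu [_ [dm [dp Hv]]]]] := q_adm.
have N_inE : N_in w = domf (q_mum q).
  apply/fsetP => v; rewrite /N_in in_fset_sep arc_in; case: fndP => vm; rewrite ?andbF ?andbT //.
  exact: (fsubsetP (fsubset_trans mE eV)).
have N_outE : N_out w = domf (q_mup q).
  apply/fsetP => v; rewrite /N_out in_fset_sep arc_out; case: fndP => vp; rewrite ?andbF ?andbT //.
  exact: (fsubsetP (fsubset_trans pE eV)).
have NE : N w = e by rewrite -(admissible_domfU q_adm) -N_inE -N_outE.
split => //; apply: quadP => //.
- apply/fmapP => v; rewrite fnd_qw_sigma NE; have [ve|vNe] := boolP (v \in e).
    rewrite sig_at_fnd ?ds //; congr Some; apply: orient_eq.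
    + by apply: sig_at_qw_orient; rewrite NE.
    + exact: (Hv v ve).1.
    + by rewrite sig_at_qw_m1 N_inE dm in_fset_sep ve.
    + by rewrite sig_at_qw_p1 N_outE dp in_fset_sep ve.
  by apply/esym/not_fnd; rewrite -ds in vNe.
- apply/fmapP => v; rewrite fnd_qw_mu NE; have [ve|vNe] := boolP (v \in e).
    by rewrite (admissible_fnd_mu q_adm ve) arc_in arc_out.
  by apply/esym/not_fnd; rewrite -dmu in vNe.
- apply/fmapP => v; rewrite fnd_qw_mum arc_in; case: ifP => // vNV.
  by apply/esym/not_fnd; apply: contraFN vNV => /(fsubsetP (fsubset_trans mE eV)).
- apply/fmapP => v; rewrite fnd_qw_mup arc_out; case: ifP => // vNV.
  by apply/esym/not_fnd; apply: contraFN vNV => /(fsubsetP (fsubset_trans pE eV)).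
Qed.

End Neighbourhoods.

Lemma sum_card_partition (T : finType) (K : choiceType) (S : {fset K}) (h : T -> K)
    (P : pred T) : (forall w, h w \in S) ->
  (\sum_(k <- S) #|[pred w | P w && (h w == k)]| = #|[pred w | P w]|)%N.
Proof.
move=> hS; rewrite -sum1_card.
under eq_bigr => k _ do rewrite -sum1_card big_mkcond /=.
rewrite exchange_big [RHS]big_mkcond /=; apply: eq_bigr => w _.
under eq_bigr => k _ do rewrite inE.
rewrite inE; case: (P w) => /=; last by apply: big1 => k _.
rewrite -big_mkcond (eq_bigl (pred1 (h w))) => [|k]; last by rewrite /= eq_sym.
by rewrite -big_filter (filter_pred1_uniq (fset_uniq S) (hS w)) big_seq1.
Qed.

Section KWellDefined.
Variables (L : choiceType) (B : bigraph L).

Lemma K_chi e q : hchi (K B) e q = #|[pred w : bW B | (N w == e) && (qw w == q)]|.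
Proof.
rewrite /= fsfun_fun; case: ifP => // qS; apply/esym/eq_card0 => w.
by rewrite !inE; apply/negP => /andP [_ /eqP qwE]; move: qS; rewrite -qwE in_imfset.
Qed.

Lemma K_hmu e : hmu (K B) e = (\sum_(q <- finsupp (hchi (K B) e)) hchi (K B) e q)%N.
Proof.
rewrite (big_fset_incl _ (B := [fset qw w | w : bW B])); last first.
- by move=> q _; rewrite mem_finsupp negbK => /eqP.
- apply/fsubsetP => q; rewrite mem_finsupp K_chi -lt0n => /card_gt0P [w].
  by rewrite inE => /andP [_ /eqP <-]; apply: in_imfset.
under eq_bigr => q _ do rewrite K_chi.
by rewrite (sum_card_partition (fun w : bW B => N w == e)) // => w; apply: in_imfset.
Qed.

Lemma mem_hE_K e : (e \in hE (K B)) = (0 < hmu (K B) e)%N.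
Proof.
apply/imfsetP/card_gt0P => [[w _ ->]|[w]]; first by exists w; rewrite inE.
by rewrite inE => /eqP <-; exists w.
Qed.

Lemma K_inH AA VV : (forall a b, AA a -> AA b -> AA (Rplus a b)) -> inB AA VV B ->
  inH AA VV (K B).
Proof.
move=> AAD B_in; split.
- by move=> e /imfsetP [w _ ->]; apply: N_sub.
- exact: mem_hE_K.
- move=> e eNE; apply/fsfunP => q; rewrite K_chi fsfunE; apply: eq_card0 => w.
  by rewrite !inE; apply/negbTE; apply: contra eNE => /andP [/eqP <- _]; apply: in_imfset.
- move=> e q; rewrite K_chi => /card_gt0P [w]; rewrite inE => /andP [/eqP <- /eqP <-].
  by split; [apply: in_imfset | apply: qw_admissible].
- by move=> e _; rewrite K_hmu.
Qed.

End KWellDefined.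

Section SystemsHypergraphs.
Variables (L : choiceType) (AA VV : R -> Prop) (H : hgraph L).
Hypothesis H_in : inH AA VV H.

Lemma inH_hmu e : hmu H e = (\sum_(q <- finsupp (hchi H e)) hchi H e q)%N.
Proof.
have [_ memE chi0 _ sumE] := H_in; case eE: (e \in hE H); first by rewrite sumE.
rewrite chi0 ?eE // finsupp0 big_seq_fset0; apply/eqP.
by rewrite -leqn0 leqNgt -memE eE.
Qed.

Lemma inH_chi_pos e q : (0 < hchi H e q)%N -> e \in hE H /\ admissible AA VV e q.
Proof. by have [_ _ _ chi_adm _] := H_in; apply: chi_adm. Qed.

End SystemsHypergraphs.

(** * Isomorphisms *)

Lemma card_pred_bij (T T' : finType) (g : T -> T') (P : pred T') :
  bijective g -> #|[pred x | P (g x)]| = #|[pred y | P y]|.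
Proof.
case=> h gh hg; rewrite -(card_image (can_inj gh)); apply: eq_card => y.
by rewrite !inE; apply/imageP/idP => [[x Px ->] //|Py]; exists (h y); rewrite ?inE hg.
Qed.

Section Relabelling.
Variables (L : choiceType) (B B' : bigraph L) (f : L -> L) (g : bW B -> bW B').
Hypotheses (f_inj : {in bV B &, injective f}) (fV : f @` bV B = bV B')
  (g_in : forall v w, v \in bV B -> bin (f v) (g w) = bin v w)
  (g_out : forall w v, v \in bV B -> bout (g w) (f v) = bout w v)
  (g_delta : forall w, bdelta (g w) = bdelta w).

Lemma mem_relabel v : v \in bV B -> f v \in bV B'.
Proof. by move=> vV; rewrite -fV in_imfset. Qed.

Lemma N_in_relabel w : N_in (g w) = f @` N_in w.
Proof.
apply: (eq_imfset_mem (D := bV B)); [exact: N_in_sub | rewrite fV; exact: N_in_sub |].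
by move=> v vV; rewrite /N_in !in_fset_sep vV mem_relabel // g_in.
Qed.

Lemma N_out_relabel w : N_out (g w) = f @` N_out w.
Proof.
apply: (eq_imfset_mem (D := bV B)); [exact: N_out_sub | rewrite fV; exact: N_out_sub |].
by move=> v vV; rewrite /N_out !in_fset_sep vV mem_relabel // g_out.
Qed.

Lemma N_relabel w : N (g w) = f @` N w.
Proof. by rewrite /Defs.N N_in_relabel N_out_relabel imfsetU. Qed.

Lemma qw_relabel w : qw (g w) = pushq f (qw w).
Proof.
have [sV muV mV pV] := qw_on w.
have fN v : v \in bV B -> (f v \in N (g w)) = (v \in N w).
  by move=> vV; rewrite N_relabel (mem_imfset_in f_inj (N_sub w) vV).
have N_fV : N (g w) `<=` f @` bV B by rewrite fV; exact: N_sub.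
apply: quadP => /=.
- apply: (pushf_eq sV f_inj) => // v vV; rewrite !fnd_qw_sigma fN //.
  case: ifP => // vN; congr Some; apply: orient_eq.
  + by apply: sig_at_qw_orient; rewrite fN.
  + exact: sig_at_qw_orient.
  + by rewrite !sig_at_qw_m1 N_in_relabel (mem_imfset_in f_inj (N_in_sub w) vV).
  + by rewrite !sig_at_qw_p1 N_out_relabel (mem_imfset_in f_inj (N_out_sub w) vV).
- by apply: (pushf_eq muV f_inj) => // v vV; rewrite !fnd_qw_mu fN // g_in // g_out.
- exact: g_delta.
- apply: (pushf_eq mV f_inj) => [|v vV]; first by rewrite fV; exact: N_in_sub.
  by rewrite !fnd_qw_mum vV mem_relabel // g_in.
- apply: (pushf_eq pV f_inj) => [|v vV]; first by rewrite fV; exact: N_out_sub.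
  by rewrite !fnd_qw_mup vV mem_relabel // g_out.
Qed.

Hypothesis g_bij : bijective g.

Lemma isoH_K_relabel AA VV t : (t = 1%N -> {in bV B, forall v, f v = v}) ->
  isoH AA VV t (K B) (K B').
Proof.
move=> f_id; exists f; split; first exact: f_inj.
split; first exact: fV.
have hE_sub e : e \in hE (K B) -> e `<=` bV B by case/imfsetP => w _ ->; exact: N_sub.
have N_eq w e : e `<=` bV B -> (N (g w) == f @` e) = (N w == e).
  by move=> eV; rewrite N_relabel; apply/eqP/eqP => [/(imfset_inj_in f_inj (N_sub w) eV)|->].
split.
  move=> e eV; apply/imfsetP/imfsetP => [[w _ ->]|[w' _ fe]].
    by exists (g w); rewrite // N_relabel.
  have [h _ hg] := g_bij; exists (h w') => //; apply/esym/eqP.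
  by rewrite -N_eq // hg fe.
split.
  move=> e eE; rewrite /= -(card_pred_bij _ g_bij); apply: eq_card => w.
  by rewrite !inE N_eq ?hE_sub.
split; last exact: f_id.
move=> e q eE q_adm; rewrite !K_chi -(card_pred_bij _ g_bij); apply: eq_card => w.
rewrite !inE N_eq ?hE_sub // qw_relabel; congr (_ && _); apply/eqP/eqP => [|->] //.
apply: (pushq_inj (qw_on w) _ f_inj).
exact: quad_onS (hE_sub _ eE) (admissible_quad_on q_adm).
Qed.

End Relabelling.

Lemma isoB_refl (L : choiceType) t (B : bigraph L) : isoB t B B.
Proof.
exists id, id; split; first by move=> ? ? _ _.
split; first exact: imfset_id.
by split; first exists id.
Qed.

Lemma isoB_trans (L : choiceType) t (B1 B2 B3 : bigraph L) :
  isoB t B1 B2 -> isoB t B2 B3 -> isoB t B1 B3.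
Proof.
case=> f [g [f_inj [fV [g_bij [g_in [g_out [g_delta f_id]]]]]]].
case=> f' [g' [f'_inj [f'V [g'_bij [g'_in [g'_out [g'_delta f'_id]]]]]]].
have fV2 v : v \in bV B1 -> f v \in bV B2 by move=> vV; rewrite -fV in_imfset.
exists (f' \o f), (g' \o g); split.
  by move=> a b aV bV /f'_inj fab; apply: f_inj; rewrite // fab ?fV2.
split; first by rewrite imfset_comp fV f'V.
split; first exact: bij_comp.
split; first by move=> v w vV /=; rewrite g'_in ?fV2 // g_in.
split; first by move=> w v vV /=; rewrite g'_out ?fV2 // g_out.
split; first by move=> w /=; rewrite g'_delta g_delta.
by move=> t1 v vV /=; rewrite f_id // f'_id // -(f_id t1 v vV) fV2.
Qed.

Lemma isoB_isoH (L : choiceType) AA VV t (B B' : bigraph L) :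
  isoB t B B' -> isoH AA VV t (K B) (K B').
Proof.
case=> f [g [f_inj [fV [g_bij [g_in [g_out [g_delta f_id]]]]]]].
exact: (isoH_K_relabel f_inj fV g_in g_out g_delta g_bij).
Qed.

Lemma isoH_refl (L : choiceType) AA VV t (H : hgraph L) : isoH AA VV t H H.
Proof.
exists id; split; first by move=> ? ? _ _.
split; first exact: imfset_id.
do 3!(split; first by move=> *; rewrite imfset_id ?pushq_id).
by [].
Qed.

Lemma isoH_trans (L : choiceType) AA VV t (H1 H2 H3 : hgraph L) : inH AA VV H1 ->
  isoH AA VV t H1 H2 -> isoH AA VV t H2 H3 -> isoH AA VV t H1 H3.
Proof.
case=> hE_sub _ _ _ _.
case=> f [f_inj [fV [f_hE [f_hmu [f_chi f_id]]]]].
case=> f' [f'_inj [f'V [f'_hE [f'_hmu [f'_chi f'_id]]]]].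
have fV2 (e : {fset L}) : e `<=` hV H1 -> f @` e `<=` hV H2.
  by move=> eV; rewrite -fV; apply/subset_imfset/fsubsetP.
have f'_inj' : {in f @` hV H1 &, injective f'} by rewrite fV.
exists (f' \o f); split.
  by move=> a b aV bV /f'_inj fab; apply: f_inj; rewrite // fab -?fV ?in_imfset.
split; first by rewrite imfset_comp fV f'V.
split; first by move=> e eV; rewrite imfset_comp f_hE // f'_hE // fV2.
split; first by move=> e eE; rewrite imfset_comp f'_hmu ?f_hmu // -f_hE ?hE_sub.
split.
  move=> e q eE q_adm; have eV := hE_sub _ eE.
  rewrite imfset_comp -(pushq_comp (quad_onS eV (admissible_quad_on q_adm)) f_inj f'_inj').
  rewrite f'_chi ?f_chi -?f_hE //.
  exact: admissible_pushq (sub_in2 (fsubsetP eV) f_inj) q_adm.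
by move=> t1 v vV /=; rewrite f_id // f'_id // -(f_id t1 v vV) -fV in_imfset.
Qed.

(** * The map K_r *)

Lemma flatten_map_uniq (S T : eqType) (F : S -> seq T) (s : seq S) :
  uniq s -> {in s, forall x, uniq (F x)} ->
  {in s &, forall x y, forall z, z \in F x -> z \in F y -> x = y} ->
  uniq (flatten (map F s)).
Proof.
elim: s => //= x s IH /andP [xNs s_uniq] F_uniq F_disj.
rewrite cat_uniq F_uniq ?mem_head // IH //; first last.
- by move=> y z ys zs; apply: F_disj; rewrite in_cons ?ys ?zs orbT.
- by move=> y ys; apply: F_uniq; rewrite in_cons ys orbT.
rewrite andbT; apply/hasPn => z /flatten_mapP [y ys zy]; apply/negP => zx.
have yxs : y \in x :: s by rewrite in_cons ys orbT.
by move: xNs; rewrite (F_disj x y (mem_head x s) yxs z zx zy) ys.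
Qed.

Lemma card_seq_sub_pred (T : choiceType) (s : seq T) (P : pred T) :
  uniq s -> #|[pred x : seq_sub s | P (ssval x)]| = count P s.
Proof.
move=> s_uniq; rewrite cardE -(size_map (@ssval _ s)) -size_filter.
apply: perm_size; apply: uniq_perm; [by rewrite map_inj_uniq ?enum_uniq //; apply: val_inj
  | exact: filter_uniq |].
move=> y; rewrite mem_filter; apply/mapP/andP => [[x]|[Py ys]].
  by rewrite mem_enum inE => Px ->; split => //; apply: ssvalP.
by exists (SeqSub ys); rewrite ?mem_enum ?inE.
Qed.

Lemma hgraphP (L : choiceType) (H H' : hgraph L) :
  hV H = hV H' -> hE H = hE H' -> hmu H = hmu H' -> hchi H = hchi H' -> H = H'.
Proof. by case: H => ? ? ? ?; case: H' => ? ? ? ? /= -> -> -> ->. Qed.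

Section InverseConstruction.
Variables (L : choiceType) (H : hgraph L).

Lemma mem_Wlist e q i : ((e, q, i) \in Wlist H) =
  [&& e \in hE H, q \in finsupp (hchi H e), 0 < i & i <= hchi H e q]%N.
Proof.
apply/flatten_mapP/idP => [[e' e'E /flatten_mapP [q' q'S /mapP [i' i'I [-> -> ->]]]]|].
  by rewrite e'E q'S; move: i'I; rewrite mem_iota add1n ltnS.
case/and4P => eE qS i0 iq; exists e => //; apply/flatten_mapP; exists q => //.
by apply/mapP; exists i; rewrite // mem_iota add1n ltnS i0.
Qed.

Lemma uniq_Wlist : uniq (Wlist H).
Proof.
apply: flatten_map_uniq => [|e _|e e' _ _ x]; first exact: fset_uniq.
  apply: flatten_map_uniq => [|q _|q q' _ _ x]; first exact: fset_uniq.
    by rewrite map_inj_uniq ?iota_uniq // => i j [].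
  by move=> /mapP [i _ ->] /mapP [j _ []].
by move=> /flatten_mapP [q _ /mapP [i _ ->]] /flatten_mapP [q' _ /mapP [j _ []]].
Qed.

Lemma count_Wlist e q :
  count (fun x => (x.1.1 == e) && (x.1.2 == q)) (Wlist H) =
  if e \in hE H then hchi H e q else 0%N.
Proof.
rewrite -size_filter -[RHS](size_iota 1) -[RHS](size_map (fun i => (e, q, i))).
apply: perm_size; apply: uniq_perm.
- exact/filter_uniq/uniq_Wlist.
- by rewrite map_inj_uniq ?iota_uniq // => i j [].
case=> [[e' q'] i]; rewrite mem_filter /= mem_Wlist; apply/idP/mapP => [|[j]].
  case/andP => /andP [/eqP -> /eqP ->] /and4P [eE _ i0 iq].
  by exists i; rewrite // mem_iota eE add1n ltnS i0.
rewrite mem_iota add1n ltnS => /andP [j0 jq] [-> -> ->]; rewrite !eqxx /=.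
case: ifP jq => [eE jq|_]; last by rewrite leqNgt j0.
by rewrite mem_finsupp j0 jq -lt0n (leq_trans j0 jq).
Qed.

Lemma size_Wlist :
  size (Wlist H) = (\sum_(e <- hE H) \sum_(q <- finsupp (hchi H e)) hchi H e q)%N.
Proof.
rewrite /Wlist size_flatten /shape -map_comp sumnE big_map; apply: eq_bigr => e _ /=.
rewrite size_flatten /shape -map_comp sumnE big_map; apply: eq_bigr => q _ /=.
by rewrite size_map size_iota.
Qed.

Lemma bin_Kr (x : bW (Kr H)) e q i v : ssval x = (e, q, i) ->
  bin v x = if (v \in e) && (m1 \in sig_at q v) then (q_mum q).[? v] else None.
Proof. by case: x => [[[? ?] ?] ?] /= [-> -> _]. Qed.

Lemma bout_Kr (x : bW (Kr H)) e q i v : ssval x = (e, q, i) ->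
  bout x v = if (v \in e) && (p1 \in sig_at q v) then (q_mup q).[? v] else None.
Proof. by case: x => [[[? ?] ?] ?] /= [-> -> _]. Qed.

Lemma bdelta_Kr (x : bW (Kr H)) e q i : ssval x = (e, q, i) -> bdelta x = q_rho q.
Proof. by case: x => [[[? ?] ?] ?] /= [_ -> _]. Qed.

Variables (AA VV : R -> Prop).
Hypothesis H_in : inH AA VV H.

Lemma Kr_vertexP (x : bW (Kr H)) : exists e q i,
  [/\ ssval x = (e, q, i), e \in hE H, admissible AA VV e q & 0 < i <= hchi H e q]%N.
Proof.
case: x => [[[e q] i] xW] /=; have := xW; rewrite mem_Wlist => /and4P [eE qS i0 iq].
exists e, q, i; split; rewrite ?i0 //.
have chi_pos : (0 < hchi H e q)%N by rewrite lt0n -mem_finsupp.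
exact: (inH_chi_pos H_in chi_pos).2.
Qed.

Lemma Kr_vertex_adm (x : bW (Kr H)) e q i : ssval x = (e, q, i) ->
  e \in hE H /\ admissible AA VV e q.
Proof.
move=> xE; have [e' [q' [i' [x'E e'E q'_adm _]]]] := Kr_vertexP x.
by move: x'E e'E q'_adm; rewrite xE => -[<- <- _].
Qed.

Lemma Kr_arcs (x : bW (Kr H)) e q i : ssval x = (e, q, i) ->
  [/\ forall v, bin v x = (q_mum q).[? v], forall v, bout x v = (q_mup q).[? v]
    & bdelta x = q_rho q].
Proof.
move=> xE; have [_ q_adm] := Kr_vertex_adm xE.
split=> [v|v|]; last exact: bdelta_Kr xE.
  by rewrite (bin_Kr _ xE) (admissible_fnd_mum q_adm).
by rewrite (bout_Kr _ xE) (admissible_fnd_mup q_adm).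
Qed.

Lemma inB_Kr : inB AA VV (Kr H).
Proof.
have [hE_sub _ _ _ _] := H_in.
split=> [v x a|x v a|x]; have [e [q [i [xE eE q_adm _]]]] := Kr_vertexP x;
  have [arc_in arc_out arc_delta] := Kr_arcs xE.
- by rewrite arc_in => /(admissible_mum_Some q_adm) [/(fsubsetP (hE_sub _ eE))].
- by rewrite arc_out => /(admissible_mup_Some q_adm) [/(fsubsetP (hE_sub _ eE))].
- by rewrite arc_delta; have [_ [_ []]] := q_adm.
Qed.

Lemma N_qw_Kr (x : bW (Kr H)) : N x = (ssval x).1.1 /\ qw x = (ssval x).1.2.
Proof.
have [hE_sub _ _ _ _] := H_in.
have [e [q [i [xE eE q_adm _]]]] := Kr_vertexP x; have [arc_in arc_out arc_delta] := Kr_arcs xE.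
by rewrite xE; exact: (N_qw_of_arcs (B := Kr H) q_adm (hE_sub _ eE) arc_in arc_out arc_delta).
Qed.

Lemma card_Kr : #|bW (Kr H)| = (\sum_(e <- hE H) hmu H e)%N.
Proof.
rewrite card_seq_sub ?uniq_Wlist // size_Wlist.
by apply: eq_bigr => e _; rewrite (inH_hmu H_in).
Qed.

Lemma K_Kr : K (Kr H) = H.
Proof.
have [_ memE chi0 _ _] := H_in.
have chiE : hchi (K (Kr H)) = hchi H.
  apply: functional_extensionality => e; apply/fsfunP => q.
  have -> : hchi H e q = count (fun y => (y.1.1 == e) && (y.1.2 == q)) (Wlist H).
    by rewrite count_Wlist; case: ifP => // eNE; rewrite chi0 ?eNE // fsfun0E.
  rewrite K_chi -card_seq_sub_pred; last exact: uniq_Wlist.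
  by apply: eq_card => x; rewrite [in LHS]inE (N_qw_Kr x).1 (N_qw_Kr x).2.
have hmuE : hmu (K (Kr H)) = hmu H.
  apply: functional_extensionality => e.
  by rewrite K_hmu (inH_hmu H_in) chiE.
apply: hgraphP => //; apply/fsetP => e.
by rewrite mem_hE_K memE hmuE.
Qed.

End InverseConstruction.

Section KrRelabelling.
Variables (L : choiceType) (AA VV : R -> Prop) (H H' : hgraph L) (f : L -> L).
Hypotheses (H_in : inH AA VV H) (H'_in : inH AA VV H').
Hypotheses (f_inj : {in hV H &, injective f}) (fV : f @` hV H = hV H')
  (f_hE : forall e, e `<=` hV H -> (e \in hE H) = (f @` e \in hE H'))
  (f_hmu : forall e, e \in hE H -> hmu H' (f @` e) = hmu H e)
  (f_chi : forall e q, e \in hE H -> admissible AA VV e q ->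
     hchi H' (f @` e) (pushq f q) = hchi H e q).

Lemma hE_relabel : hE H' = [fset f @` e | e : {fset L} in hE H].
Proof.
have [hE_sub _ _ _ _] := H_in; have [hE'_sub _ _ _ _] := H'_in.
apply/fsetP => e'; apply/idP/imfsetP => [e'E|[e eE ->]]; last by rewrite -f_hE ?hE_sub.
have e'_img : e' = f @` [fset v in hV H | f v \in e'].
  apply: (eq_imfset_mem (D := hV H)); [exact: fset_sub | rewrite fV; exact: hE'_sub |].
  by move=> v vV; rewrite in_fset_sep vV.
by exists [fset v in hV H | f v \in e']; rewrite //= f_hE ?fset_sub // -e'_img.
Qed.

Lemma Kr_quad_on (x : bW (Kr H)) e q i : ssval x = (e, q, i) -> quad_on q (hV H).
Proof.
move=> /(Kr_vertex_adm H_in) [eE q_adm]; have [hE_sub _ _ _ _] := H_in.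
exact: quad_onS (hE_sub _ eE) (admissible_quad_on q_adm).
Qed.

Lemma relabel_mem (x : bW (Kr H)) :
  (f @` (ssval x).1.1, pushq f (ssval x).1.2, (ssval x).2) \in Wlist H'.
Proof.
have [e [q [i [xE eE q_adm /andP [i0 iq]]]]] := Kr_vertexP H_in x.
have [hE_sub _ _ _ _] := H_in.
rewrite xE /= mem_Wlist -f_hE ?hE_sub // eE mem_finsupp f_chi //.
by rewrite i0 iq -lt0n (leq_trans i0 iq).
Qed.

Definition Kr_relabel (x : bW (Kr H)) : bW (Kr H') := SeqSub (relabel_mem x).

Lemma Kr_relabelE (x : bW (Kr H)) e q i :
  ssval x = (e, q, i) -> ssval (Kr_relabel x) = (f @` e, pushq f q, i).
Proof. by move=> xE; rewrite /= xE. Qed.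

Lemma Kr_relabel_inj : injective Kr_relabel.
Proof.
move=> x y /(congr1 (@ssval _ _)) /=; have [hE_sub _ _ _ _] := H_in.
have [e [q [i [xE eE _ _]]]] := Kr_vertexP H_in x.
have [e' [q' [i' [yE e'E _ _]]]] := Kr_vertexP H_in y.
rewrite xE yE /= => /eqP; rewrite 2!xpair_eqE => /andP [/andP [/eqP fee' /eqP fqq'] /eqP ii'].
apply: val_inj; rewrite /= xE yE ii'.
rewrite (imfset_inj_in f_inj (hE_sub _ eE) (hE_sub _ e'E) fee').
by rewrite (pushq_inj (Kr_quad_on xE) (Kr_quad_on yE) f_inj fqq').
Qed.

Lemma Kr_relabel_bij : bijective Kr_relabel.
Proof.
have [hE_sub _ _ _ _] := H_in.
apply: (inj_card_bij Kr_relabel_inj).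
rewrite (card_Kr H_in) (card_Kr H'_in) hE_relabel big_imfset /=.
  by rewrite (eq_big_seq _ f_hmu).
by move=> e e' /hE_sub eV /hE_sub e'V /=; exact: (imfset_inj_in f_inj eV e'V).
Qed.

Lemma Kr_relabel_arcs (x : bW (Kr H)) :
  [/\ forall v, v \in hV H -> bin (f v) (Kr_relabel x) = bin v x,
      forall v, v \in hV H -> bout (Kr_relabel x) (f v) = bout x v
    & bdelta (Kr_relabel x) = bdelta x].
Proof.
have [e [q [i [xE _ _ _]]]] := Kr_vertexP H_in x.
have [arc_in arc_out arc_delta] := Kr_arcs H_in xE.
have [arc_in' arc_out' arc_delta'] := Kr_arcs H'_in (Kr_relabelE xE).
have [_ _ mV pV] := Kr_quad_on xE.
split=> [v vV|v vV|]; last by rewrite arc_delta' arc_delta.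
  by rewrite arc_in arc_in' (fnd_pushf_in mV f_inj vV).
by rewrite arc_out arc_out' (fnd_pushf_in pV f_inj vV).
Qed.

End KrRelabelling.

Lemma isoB_Kr_of_isoH (L : choiceType) AA VV t (H H' : hgraph L) :
  inH AA VV H -> inH AA VV H' -> isoH AA VV t H H' -> isoB t (Kr H) (Kr H').
Proof.
move=> H_in H'_in [f [f_inj [fV [f_hE [f_hmu [f_chi f_id]]]]]].
have arcs := Kr_relabel_arcs H_in H'_in f_inj f_hE f_chi.
exists f, (Kr_relabel H_in f_hE f_chi); split; first exact: f_inj.
split; first exact: fV.
split; first exact: Kr_relabel_bij.
split; first by move=> v x; have [arc_in _ _] := arcs x; apply: arc_in.
split; first by move=> x v; have [_ arc_out _] := arcs x; apply: arc_out.
split; first by move=> x; have [_ _ arc_delta] := arcs x.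
exact: f_id.
Qed.

(** * Twins *)

Lemma inj_surj_bij (T T' : finType) (h : T -> T') :
  injective h -> (forall y, exists x, h x = y) -> bijective h.
Proof.
move=> h_inj h_surj; apply: (inj_card_bij h_inj); rewrite -(card_codom h_inj).
by apply/subset_leq_card/subsetP => y _; have [x <-] := h_surj y; apply: codom_f.
Qed.

Lemma isoB_of_bij (L : choiceType) t (B B' : bigraph L) (g : bW B -> bW B') :
  bV B = bV B' -> bijective g ->
  (forall v w, v \in bV B -> bin v (g w) = bin v w) ->
  (forall w v, v \in bV B -> bout (g w) v = bout w v) ->
  (forall w, bdelta (g w) = bdelta w) -> isoB t B B' /\ isoB t B' B.
Proof.
move=> VB g_bij g_in g_out g_delta; have [h gh hg] := g_bij.
split; exists id.
  exists g; split; first by move=> ? ? _ _.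
  by rewrite imfset_id; do !split.
exists h; split; first by move=> ? ? _ _.
rewrite imfset_id -VB; split=> //; split; first by exists g.
split; first by move=> v w vV; rewrite -[in RHS](hg w) g_in.
split; first by move=> w v vV; rewrite -[in RHS](hg w) g_out.
by split=> // w; rewrite -[in RHS](hg w) g_delta.
Qed.

Section Twins.
Variables (L : choiceType) (B : bigraph L).

(* The vertices of [W] that [K] cannot tell apart; [K_r (K B)] numbers them from 1. *)
Definition twins e q := enum [pred w : bW B | (N w == e) && (qw w == q)].

Definition twin_rank w := index w (twins (N w) (qw w)).

Lemma size_twins e q : size (twins e q) = hchi (K B) e q.
Proof. by rewrite K_chi cardE. Qed.

Lemma mem_twins w : w \in twins (N w) (qw w).
Proof. by rewrite mem_enum inE !eqxx. Qed.

Lemma twin_rank_mem w : (N w, qw w, (twin_rank w).+1) \in Wlist (K B).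
Proof.
have rank_lt : twin_rank w < hchi (K B) (N w) (qw w) by rewrite -size_twins index_mem mem_twins.
by rewrite mem_Wlist in_imfset // mem_finsupp -lt0n (leq_ltn_trans (leq0n _) rank_lt).
Qed.

Definition twin_vertex w : bW (Kr (K B)) := SeqSub (twin_rank_mem w).

Lemma twin_vertex_inj : injective twin_vertex.
Proof.
move=> w1 w2 /(congr1 (@ssval _ _)) /= /eqP; rewrite 2!xpair_eqE.
case/andP => /andP [/eqP N12 /eqP qw12] /eqP /succn_inj.
have w2_twin : w2 \in twins (N w1) (qw w1) by rewrite N12 qw12 mem_twins.
by rewrite /twin_rank -N12 -qw12; exact: (index_inj w1 (mem_twins w1) w2_twin).
Qed.

Lemma twin_vertex_surj x : exists w, twin_vertex w = x.
Proof.
case: x => [[[e q] i] xW]; have := xW; rewrite mem_Wlist -size_twins => /and4P [_ _ i0 iq].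
have i_lt : i.-1 < size (twins e q) by rewrite prednK.
have [w0 _] : exists w0, w0 \in twins e q.
  by case: (twins e q) i_lt => // w0 s _; exists w0; rewrite mem_head.
have := mem_nth w0 i_lt; rewrite mem_enum inE => /andP [/eqP Nw /eqP qww].
exists (nth w0 (twins e q) i.-1); apply: val_inj => /=.
by rewrite /twin_rank Nw qww index_uniq ?enum_uniq // prednK.
Qed.

Lemma isoB_Kr_K AA VV t : (forall a b, AA a -> AA b -> AA (Rplus a b)) -> inB AA VV B ->
  isoB t B (Kr (K B)) /\ isoB t (Kr (K B)) B.
Proof.
move=> AAD B_in; have KB_in := K_inH AAD B_in.
have twin_arcs w := Kr_arcs KB_in (erefl (ssval (twin_vertex w))).
have twin_bij := inj_surj_bij (@twin_vertex_inj) twin_vertex_surj.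
apply: (@isoB_of_bij _ _ _ _ twin_vertex (erefl (bV B)) twin_bij).
- by move=> v w vV; have [-> _ _] := twin_arcs w; rewrite fnd_qw_mum vV.
- by move=> w v vV; have [_ -> _] := twin_arcs w; rewrite fnd_qw_mup vV.
- by move=> w; have [_ _ ->] := twin_arcs w.
Qed.

End Twins.

(** * Isomorphism classes *)

Section ClassBijection.
Variables (X Y : Type) (inX : X -> Prop) (inY : Y -> Prop).
Variables (RX : X -> X -> Prop) (RY : Y -> Y -> Prop) (F : X -> Y) (G : Y -> X).
Hypotheses (RX_refl : forall x, RX x x)
  (RX_trans : forall x1 x2 x3, RX x1 x2 -> RX x2 x3 -> RX x1 x3)
  (RY_refl : forall y, RY y y)
  (RY_trans : forall y1 y2 y3, inY y1 -> RY y1 y2 -> RY y2 y3 -> RY y1 y3)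
  (F_in : forall x, inX x -> inY (F x)) (G_in : forall y, inY y -> inX (G y))
  (F_R : forall x x', RX x x' -> RY (F x) (F x'))
  (G_R : forall y y', inY y -> inY y' -> RY y y' -> RX (G y) (G y'))
  (GF_R : forall x, inX x -> RX x (G (F x)) /\ RX (G (F x)) x)
  (FG : forall y, inY y -> F (G y) = y).

Let clsX x := fun x' => inX x' /\ RX x x'.
Let clsY y := fun y' => inY y' /\ RY y y'.

Lemma induced_class_bijection :
  exists (Ft : (X -> Prop) -> (Y -> Prop)) (Gt : (Y -> Prop) -> (X -> Prop)),
    (forall x, inX x -> Ft (clsX x) = clsY (F x)) /\
    (forall y, inY y -> Gt (clsY y) = clsX (G y)) /\
    (forall x, inX x -> Gt (Ft (clsX x)) = clsX x) /\
    (forall y, inY y -> Ft (Gt (clsY y)) = clsY y).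
Proof.
have PFE (T : Type) (P Q : T -> Prop) : (forall z, P z <-> Q z) -> P = Q.
  move=> PQ; apply: functional_extensionality => z.
  exact: propositional_extensionality.
pose Ft P y' := exists x, P x /\ clsY (F x) y'.
pose Gt Q x' := exists y, Q y /\ clsX (G y) x'.
have FtE x : inX x -> Ft (clsX x) = clsY (F x).
  move=> xX; apply: PFE => y'; split=> [[x1 [[_ xx1] [y'Y Fx1y']]]|Fxy'].
    by split=> //; apply: RY_trans (F_in xX) (F_R xx1) Fx1y'.
  by exists x.
have GtE y : inY y -> Gt (clsY y) = clsX (G y).
  move=> yY; apply: PFE => x'; split=> [[y1 [[y1Y yy1] [x'X Gy1x']]]|Gyx'].
    by split=> //; apply: RX_trans (G_R yY y1Y yy1) Gy1x'.
  by exists y.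
exists Ft, Gt; do !split => //.
  move=> x xX; rewrite FtE // GtE; last exact: F_in.
  apply: PFE => x'.
  have [xGFx GFxx] := GF_R xX.
  by split=> -[x'X R]; split=> //; [apply: RX_trans R | apply: RX_trans R].
by move=> y yY; rewrite GtE // FtE ?FG //; exact: G_in.
Qed.

End ClassBijection.

Theorem mainTheorem4 (L : choiceType) (t : nat) (AA VV : R -> Prop) :
  (t <= 1)%N ->
  (exists a, AA a) ->
  (forall a b, AA a -> AA b -> AA (Rplus a b)) ->
  (exists x, VV x) ->
  (* (1) K is well defined *)
  (forall B : bigraph L, inB AA VV B -> inH AA VV (K B)) /\
  (* (2) K_r is well defined, K o K_r = id, hence K is surjective *)
  (forall H : hgraph L, inH AA VV H -> inB AA VV (Kr H) /\ K (Kr H) = H) /\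
  (forall H : hgraph L, inH AA VV H -> exists B, inB AA VV B /\ K B = H) /\
  (* (3) K_r (K B) is type-t isomorphic to B *)
  (forall B : bigraph L, inB AA VV B -> isoB t (Kr (K B)) B) /\
  (* (4) K induces a bijection on type-t isomorphism classes *)
  (exists (Kt : (bigraph L -> Prop) -> (hgraph L -> Prop))
          (Kti : (hgraph L -> Prop) -> (bigraph L -> Prop)),
     (forall B, inB AA VV B -> Kt (clsB AA VV t B) = clsH AA VV t (K B)) /\
     (forall H, inH AA VV H -> Kti (clsH AA VV t H) = clsB AA VV t (Kr H)) /\
     (forall B, inB AA VV B -> Kti (Kt (clsB AA VV t B)) = clsB AA VV t B) /\
     (forall H, inH AA VV H -> Kt (Kti (clsH AA VV t H)) = clsH AA VV t H)).
Proof.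
move=> _ _ AAD _.
have K_in (B : bigraph L) : inB AA VV B -> inH AA VV (K B) := K_inH AAD.
split; first exact: K_in.
split; first by move=> H H_in; split; [exact: inB_Kr H_in | exact: K_Kr H_in].
split; first by move=> H H_in; exists (Kr H); split; [exact: inB_Kr H_in | exact: K_Kr H_in].
split; first by move=> B B_in; exact: (isoB_Kr_K t AAD B_in).2.
apply: (induced_class_bijection (inX := inB AA VV) (inY := inH AA VV) (RX := isoB t)
  (RY := isoH AA VV t) (F := @K L) (G := @Kr L)).
- by move=> B; apply: isoB_refl.
- by move=> B1 B2 B3; apply: isoB_trans.
- by move=> H; apply: isoH_refl.
- by move=> H1 H2 H3; apply: isoH_trans.
- exact: K_in.
- by move=> H; apply: inB_Kr.
- exact: isoB_isoH.
- by move=> H H'; apply: isoB_Kr_of_isoH.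
- by move=> B B_in; exact: (isoB_Kr_K t AAD B_in).
- by move=> H; apply: K_Kr.
Qed.
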